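(* Let $X,Y,\tilde X,\tilde Y$ be cellular spaces with $X,\tilde X$ compact, let $r\ge0$, and let $g\colon Y^X\to\tilde Y^{\tilde X}$ be a primitive transform. If $a,b\colon X\to Y$ are maps with $a\overset{r}{\approx}b$, then $g(a)\overset{r}{\approx}g(b)$.
   Context: Cellular space = based CW complex; maps based unless called unbased. $Y^X$ = space of based maps $X\to Y$ (compact-open), based at the constant map. A transform is an unbased (continuous) map $g\colon Y^X\to\tilde Y^{\tilde X}$; it is primitive if for each $p\in\tilde X$ there are a point $k(p)\in X$ and an unbased map $h^p\colon Y\to\tilde Y$ such that $g(d)(p)=h^p(d(k(p)))$ for all $d\in Y^X$. Strong similarity: $\langle W\rangle$ = free abelian group on a set $W$. $Y^X_a$ = path component of $a$; $V\mapsto V|_R$ restriction; $\mathcal F_n(X)$ = finite $R\subseteq X$ containing the basepoint with $|R|\le n+1$; $\langle Y^X\rangle^{(s)}=\{V:V|_R=0\ \forall R\in\mathcal F_{s-1}(X)\}$. For unbased $U,V$: $V^{(U)}$ = unbased maps; $\Xi^U(v)$ = constant map at $v$; for $U=\coprod_iU_i$, $\boxed{\sqcup}_i\langle w_i\rangle=\langle w\rangle$, $w|_{U_i}=w_i$, multilinear. For nonempty finite $E$: simplex $\Delta E$, faces $\Delta F$; layouts = sets $A$ of pairwise disjoint nonempty subsets; $\Delta[A]=\coprod_{F\in A}\Delta F$; $S\in\langle V^{(\Delta E)}\rangle$ fissile if $S|_{\Delta[A]}=\boxed{\sqcup}_{F\in A}S|_{\Delta F}$ for all layouts. $U\wr X=(U\times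 X)/(U\times\{x_0\})$, $\#^X(w)(u\wr x)=w(u)(x)$, $\langle (Y^X)^{(U)}\rangle^{(s)}_X=\langle\#^X\rangle^{-1}\langle Y^{U\wr X}\rangle^{(s)}$. $a\overset{r}{\approx}b$ iff for each nonempty finite $E$ there is a fissile $S\in\langle (Y^X_a)^{(\Delta E)}\rangle$ with $\langle\Xi^{\Delta E}(b)\rangle-S\in\langle (Y^X)^{(\Delta E)}\rangle^{(r+1)}_X$. *)

From HB Require Import structures.
From mathcomp Require Import all_boot all_order all_algebra.
From mathcomp Require Import all_classical all_reals all_analysis.
Import Order.TTheory GRing.Theory Num.Theory.
Import numFieldTopology.Exports.

Set Implicit Arguments.
Unset Strict Implicit.
Unset Printing Implicit Defensive.

Local Open Scope classical_set_scope.
Local Open Scope ring_scope.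

(* Cells are modelled on the closed unit ball of 'rV[R]_n for the (max)     *)
(* norm of mathcomp-analysis, i.e. the cube [-1,1]^n, which is homeomorphic  *)
(* to D^n with boundary S^{n-1} going to the boundary.                       *)

Definition cdisk (R : realType) (n : nat) : set 'rV[R]_n := [set v | `|v| <= 1].
Definition odisk (R : realType) (n : nat) : set 'rV[R]_n := [set v | `|v| < 1].
Definition bsphere (R : realType) (n : nat) : set 'rV[R]_n := [set v | `|v| = 1].
Arguments cdisk R n : clear implicits.
Arguments odisk R n : clear implicits.
Arguments bsphere R n : clear implicits.

(* X (with basepoint x0) is a CW complex with x0 a 0-cell: there is a family
   of cells indexed by I, of dimension dim i, with characteristic maps Phi i:
   - X is Hausdorff;
   - Phi i is continuous on the closed disk;
   - Phi i restricted to the open disk is a homeomorphism onto the cell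
     e_i := Phi i (open disk) (injective, and relatively open);
   - the cells partition X;
   - Phi i maps the boundary sphere into finitely many cells of lower
     dimension (closure finiteness + attaching in the lower skeleton);
   - X carries the weak topology w.r.t. the closed cells Phi i (closed disk);
   - x0 is a 0-cell. *)
Definition cellular (R : realType) (X : topologicalType) (x0 : X) : Prop :=
  exists (I : Type) (dim : I -> nat) (Phi : forall i, 'rV[R]_(dim i) -> X),
    let e := fun i => Phi i @` odisk R (dim i) in
    [/\ hausdorff_space X,
        (forall i, {within cdisk R (dim i), continuous (Phi i)}),
        (forall i u v, odisk R (dim i) u -> odisk R (dim i) v ->
             Phi i u = Phi i v -> u = v),
        (forall i (U : set 'rV[R]_(dim i)), open U ->
             exists W : set X, open W /\
               Phi i @` (U `&` odisk R (dim i)) = W `&` e i) &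
        (forall x : X, exists! i, e i x) ] /\
    [/\ (forall i, exists J : set I, finite_set J /\
             (forall j, J j -> (dim j < dim i)%N) /\
             Phi i @` bsphere R (dim i) `<=` \bigcup_(j in J) e j),
        (forall A : set X,
             (forall i, closed (A `&` Phi i @` cdisk R (dim i))) -> closed A) &
        (exists i, dim i = 0%N /\ Phi i 0 = x0) ].

(* Y^X as a subset of all functions X -> Y, carrying the compact-open
   topology (subspace of mathcomp-analysis's {compact-open, X -> Y}). *)
Definition co (X Y : topologicalType) : topologicalType := {compact-open, X -> Y}.

Definition based (X Y : topologicalType) (x0 : X) (y0 : Y) (d : X -> Y) : Prop :=
  continuous d /\ d x0 = y0.

Definition in_pcomp (R : realType) (X Y : topologicalType) (x0 : X) (y0 : Y)
    (a d : X -> Y) : Prop :=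
  exists gam : R -> co X Y,
    [/\ {within `[0, 1], continuous gam},
        (forall t, `[0, 1]%classic t -> based x0 y0 (gam t)),
        gam 0 = a & gam 1 = d].

(* <W> for W a subset of a type T: finitely supported functions T -> int    *)
(* with support inside W (coefficient functions of formal sums).           *)

Definition free_ab (T : Type) (W : set T) (V : T -> int) : Prop :=
  finite_set [set t | V t != 0] /\ (forall t, V t != 0 -> W t).

Definition fgen (T : choiceType) (t0 : T) : T -> int :=
  fun t => if t == t0 then 1 else 0.

Definition pushf (A B : choiceType) (f : A -> B) (V : A -> int) : B -> int :=
  fun b => \sum_(a \in [set a | f a = b]) V a.

Definition card_atmost (T : Type) (S : set T) (n : nat) : Prop :=
  exists f : 'I_n -> T, S `<=` range f.

Definition restr (T : Type) (U : Type) (S : set T) (d : T -> U) : S -> U :=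
  fun t => d (set_val t).

(** * Half-smash U wr X = (U x X)/(U x {x0}) as a pointed set               *)
(* Points are represented by canonical representatives: None for the        *)
(* basepoint (the collapsed U x {x0}), Some (u, x) with x <> x0 otherwise.  *)

Definition wr_ok (U X : Type) (x0 : X) (p : option (U * X)) : Prop :=
  match p with None => True | Some (_, x) => x <> x0 end.

Definition wr (U X : Type) (x0 : X) : Type := {p : option (U * X) | wr_ok x0 p}.

Definition wr_base (U X : Type) (x0 : X) : wr U x0 := exist _ None I.

Definition hash (U X Y : Type) (x0 : X) (y0 : Y) (w : U -> X -> Y) : wr U x0 -> Y :=
  fun p => match proj1_sig p with None => y0 | Some (u, x) => w u x end.
Arguments wr_ok {U X} x0 p.
Arguments wr U {X} x0.
Arguments wr_base U {X} x0.
Arguments hash {U X Y} x0 y0 w p.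

(* <(Y^X)^(U)>^(s)_X = <#^X>^{-1} <Y^{U wr X}>^(s): the image under <#^X>
   restricts to 0 on every finite R in F_{s-1}(U wr X), i.e. containing the
   basepoint and with at most s points. *)
Definition filt_wr (U X : Type) (Y : choiceType) (x0 : X) (y0 : Y) (s : nat)
    (T : (U -> X -> Y) -> int) : Prop :=
  forall Rs : set (wr U x0), Rs (wr_base U x0) -> card_atmost Rs s ->
    pushf (@restr _ Y Rs) (pushf (hash x0 y0) T) = (fun _ => 0).

Definition simplex_set (R : realType) (E : finType) : set {ptws E -> R} :=
  [set t | (forall e, 0 <= t e) /\ \sum_(e : E) t e = 1].

Arguments simplex_set R E : clear implicits.
Definition simplex (R : realType) (E : finType) : topologicalType :=
  set_type (simplex_set R E).
Arguments simplex R E : clear implicits.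

Definition face (R : realType) (E : finType) (F : {set E}) : set (simplex R E) :=
  [set t | forall e, e \notin F -> (set_val t : {ptws E -> R}) e = 0].
Arguments face R {E} F.

(* Delta[A] = coproduct of the faces Delta F, F in A; for a layout these
   faces are pairwise disjoint closed subsets of Delta E, so Delta[A] is
   their union with the subspace topology. *)
Definition lay (R : realType) (E : finType) (A : {set {set E}}) : set (simplex R E) :=
  [set t | exists2 F, F \in A & face R F t].
Arguments lay R {E} A.

Definition layout (E : finType) (A : {set {set E}}) : Prop :=
  (forall F, F \in A -> (0 < #|F|)%N) /\
  (forall F G, F \in A -> G \in A -> F != G -> forall e, e \in F -> e \notin G).

Lemma face_lay_subproof (R : realType) (E : finType) (A : {set {set E}})
  (F : {set E}) (hF : F \in A) (t : face R F) : set_val t \in lay R A.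
Proof.
apply/mem_set; exists F => //.
by case: t => /= t; rewrite /set_val /= /eqincl => /set_mem.
Qed.

Definition face_incl (R : realType) (E : finType) (A : {set {set E}})
  (F : {set E}) (hF : F \in A) : face R F -> lay R A :=
  fun t => exist _ (set_val t) (face_lay_subproof hF t).

(* the multilinear extension of gluing: for V_F in <V^(Delta F)>, F in A,
   the coefficient of <w> in box-union_F V_F is prod_F V_F(w|Delta F)
   (gluing is a bijection between families (w_F)_F and maps w on Delta[A]) *)
Definition boxunion (R : realType) (E : finType) (A : {set {set E}}) (V : Type)
  (VF : forall F : {set E}, (face R F -> V) -> int) : (lay R A -> V) -> int :=
  fun w => \prod_(F : {F : {set E} | F \in A})
             VF (sval F) (w \o face_incl (svalP F)).

Definition fissile (R : realType) (E : finType) (V : choiceType)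
    (S : (simplex R E -> V) -> int) : Prop :=
  forall A : {set {set E}}, layout A ->
    pushf (@restr _ V (lay R A)) S =
    boxunion (fun F => pushf (@restr _ V (face R F)) S).

Definition approx_r (R : realType) (X Y : topologicalType) (x0 : X) (y0 : Y)
    (r : nat) (a b : X -> Y) : Prop :=
  forall E : finType, (0 < #|E|)%N ->
    exists S : (simplex R E -> X -> Y) -> int,
      [/\ free_ab (fun w : simplex R E -> X -> Y =>
                     continuous (w : simplex R E -> co X Y) /\
                     forall u, in_pcomp R x0 y0 a (w u)) S,
          fissile S &
          filt_wr x0 y0 r.+1 (fgen (fun _ : simplex R E => b) \- S)].

Definition transform (X Y Xt Yt : topologicalType) (x0 : X) (y0 : Y)
    (xt0 : Xt) (yt0 : Yt) (g : co X Y -> co Xt Yt) : Prop :=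
  (forall d, based x0 y0 d -> based xt0 yt0 (g d)) /\
  {within [set d : co X Y | based x0 y0 d], continuous g}.

Definition primitive (X Y Xt Yt : topologicalType) (x0 : X) (y0 : Y)
    (g : co X Y -> co Xt Yt) : Prop :=
  forall p : Xt, exists (k : X) (h : Y -> Yt),
    continuous h /\ forall d, based x0 y0 d -> g d p = h (d k).

From HB Require Import structures.
From mathcomp Require Import all_boot all_order all_algebra.
From mathcomp Require Import all_classical all_reals all_analysis.
Import Order.TTheory GRing.Theory Num.Theory.
Import numFieldTopology.Exports.
Local Open Scope classical_set_scope.
Local Open Scope ring_scope.

(* If S witnesses a ~r~ b over the simplex Delta E, its pushforward along
   w |-> g \o w witnesses g(a) ~r~ g(b).  Continuity and path components are
   kept because g is continuous on based maps.  Fissility is kept because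
   post-composition commutes with restriction to faces and with gluing along
   a layout.  For the filtration, primitivity says g(d)(p) = h_p(d(k p)), so
   on the half-smash the transformed family at (u, p) is read off the original
   family at (u, k p) through h_p: restricting to a set of at most r+1 points
   containing the basepoint factors through the restriction to its image under
   (u, p) |-> (u, k p), which is again such a set, where the original element
   vanishes. *)

Definition fin_supp {A : Type} (V : A -> int) : Prop := finite_set [set a | V a != 0].

Definition supp_in {A : eqType} (V : A -> int) (s : seq A) : Prop :=
  forall a, V a != 0 -> a \in s.

Lemma fin_supp_seq {A : choiceType} {V : A -> int} :
  fin_supp V -> exists2 s, uniq s & supp_in V s.
Proof.
move=> finV; exists (finmap.enum_fset (fset_set [set a | V a != 0])).
  exact: finmap.fset_uniq.
by move=> a Va; rewrite in_fset_set // inE.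
Qed.

Lemma fin_supp_finType {A : finType} (V : A -> int) : fin_supp V.
Proof. exact: finite_finset. Qed.

Lemma pushfE {A B : choiceType} (f : A -> B) {V : A -> int} {s : seq A} :
  uniq s -> supp_in V s -> pushf f V =1 fun b => \sum_(a <- s | f a == b) V a.
Proof.
move=> us sV b; rewrite bigfs //; last by move=> a _; apply: contraNeq => /sV.
by apply: eq_fsbigl; apply/seteqP; split=> a /=; rewrite unfold_in /= => /eqP.
Qed.

Lemma pushf_neq0 {A B : choiceType} (f : A -> B) V b :
  pushf f V b != 0 -> exists2 a, f a = b & V a != 0.
Proof. exact: (@fsbigN1 _ _ _ unit _ _ (fun _ => V) tt). Qed.

Lemma fin_supp_pushf {A B : choiceType} (f : A -> B) {V : A -> int} :
  fin_supp V -> fin_supp (pushf f V).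
Proof.
move=> finV; apply: sub_finite_set (finite_image f finV) => b /pushf_neq0[a <- Va].
by exists a.
Qed.

Lemma pushf0 {A B : choiceType} (f : A -> B) : pushf f (fun _ => 0) = (fun _ => 0).
Proof. by apply/funext => b; apply: fsbig1. Qed.

Lemma pushf_fgen {A B : choiceType} (f : A -> B) a : pushf f (fgen a) = fgen (f a).
Proof.
apply/funext => b; rewrite (@pushfE _ _ f _ [:: a]) //; last first.
  by move=> a'; rewrite /fgen inE; case: (a' == a); rewrite ?eqxx.
by rewrite /fgen big_cons big_nil eqxx addr0 (eq_sym b).
Qed.

Lemma pushf_comp {A B C : choiceType} (f : A -> B) (g : B -> C) {V : A -> int} :
  fin_supp V -> pushf g (pushf f V) = pushf (g \o f) V.
Proof.
move=> /fin_supp_seq[s us sV]; apply/funext => c.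
have sfV : supp_in (pushf f V) (undup (map f s)).
  by move=> b /pushf_neq0[a <- /sV sa]; rewrite mem_undup map_f.
rewrite (pushfE _ (undup_uniq _) sfV) (pushfE _ us sV).
under eq_bigr => b _ do rewrite (pushfE _ us sV).
rewrite (exchange_big_dep (fun a => g (f a) == c)) /=; last first.
  by move=> b a /eqP <- /eqP ->.
rewrite big_seq_cond [RHS]big_seq_cond; apply: eq_bigr => a /andP[sa /eqP gfa].
rewrite (eq_bigl (pred1 (f a))) => [|b]; last first.
  by apply/andP/eqP => [[_ /eqP <-] | ->]; rewrite // gfa !eqxx.
by rewrite -big_filter filter_pred1_uniq ?undup_uniq ?mem_undup ?map_f // big_seq1.
Qed.

Lemma eq_pushf {A B : choiceType} (f f' : A -> B) {V : A -> int} : fin_supp V ->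
  (forall a, V a != 0 -> f a = f' a) -> pushf f V = pushf f' V.
Proof.
move=> /fin_supp_seq[s us sV] ff'; apply/funext => b.
rewrite (pushfE f us sV) (pushfE f' us sV) big_mkcond [RHS]big_mkcond.
apply: eq_bigr => a _.
by case: (eqVneq (V a) 0) => [->|/ff' ->]; rewrite ?if_same.
Qed.

Lemma pushfB {A B : choiceType} (f : A -> B) {V1 V2 : A -> int} :
  fin_supp V1 -> fin_supp V2 -> pushf f (V1 \- V2) = pushf f V1 \- pushf f V2.
Proof.
move=> /fin_supp_seq[s1 _ sV1] /fin_supp_seq[s2 _ sV2].
pose s := undup (s1 ++ s2).
have [us sV1' sV2'] : [/\ uniq s, supp_in V1 s & supp_in V2 s].
  split=> [|a /sV1|a /sV2]; rewrite ?undup_uniq //.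
    by rewrite mem_undup mem_cat => ->.
  by rewrite mem_undup mem_cat => ->; rewrite orbT.
have sV : supp_in (V1 \- V2) s.
  move=> a; case sa: (a \in s) => //=.
  by rewrite (contraNeq (sV1' a)) ?sa // (contraNeq (sV2' a)) ?sa // subrr eqxx.
apply/funext => b; rewrite /= (pushfE f us sV) (pushfE f us sV1') (pushfE f us sV2').
by rewrite -sumrB.
Qed.

Lemma free_ab_sub {A : Type} {W W' : set A} {V : A -> int} :
  W `<=` W' -> free_ab W V -> free_ab W' V.
Proof. by move=> WW' [finV WV]; split=> // a /WV /WW'. Qed.

Lemma free_ab_fgen {A : choiceType} (W : set A) a : W a -> free_ab W (fgen a).
Proof.
have fa t : fgen a t != 0 -> t = a.
  by rewrite /fgen; case: (eqVneq t a) => // _; rewrite eqxx.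
move=> Wa; split=> [|t /fa -> //].
by apply: sub_finite_set (finite_set1 a) => t /fa ->.
Qed.

Lemma free_abB {A : Type} {W : set A} {V1 V2 : A -> int} :
  free_ab W V1 -> free_ab W V2 -> free_ab W (V1 \- V2).
Proof.
move=> [fin1 W1] [fin2 W2].
have V12 a : V1 a - V2 a != 0 -> V1 a != 0 \/ V2 a != 0.
  by case: (eqVneq (V1 a) 0) => [->|]; [rewrite sub0r oppr_eq0; right|left].
split=> [|a /V12 [/W1|/W2] //].
have fin12 : finite_set ([set a | V1 a != 0] `|` [set a | V2 a != 0]).
  by rewrite finite_setU.
by apply: sub_finite_set fin12 => a /V12.
Qed.

Lemma free_ab_pushf {A B : choiceType} {W : set A} {W' : set B} (f : A -> B)
    {V : A -> int} :
  (forall a, W a -> W' (f a)) -> free_ab W V -> free_ab W' (pushf f V).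
Proof.
move=> fW [finV WV]; split; first exact: fin_supp_pushf.
by move=> b /pushf_neq0[a <- /WV /fW].
Qed.

Lemma continuous_within_comp {T U V : topologicalType} (A : set T) (B : set U)
    (f : T -> U) (g : U -> V) :
  {within A, continuous f} -> (forall t, A t -> B (f t)) ->
  {within B, continuous g} -> {within A, continuous (g \o f)}.
Proof.
move=> fc fAB gc t P /(gc (f t)).
exact: (@subspaceT_continuous _ _ A B (mkfun_fun fAB) fc t).
Qed.

Lemma in_pcomp_based (R : realType) (X Y : topologicalType) (x0 : X) (y0 : Y)
    (a d : X -> Y) :
  in_pcomp R x0 y0 a d -> based x0 y0 d.
Proof.
move=> [gam [_ gam_based _ <-]]; apply: gam_based.
by rewrite /= in_itv /= ler01 lexx.
Qed.

Section Transform.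
Context {R : realType} {X Y Xt Yt : topologicalType}.
Context {x0 : X} {y0 : Y} {xt0 : Xt} {yt0 : Yt} {g : co X Y -> co Xt Yt}.
Hypothesis gT : transform x0 y0 xt0 yt0 g.

Lemma transform_comp_continuous (U : topologicalType) (w : U -> co X Y) :
  continuous w -> (forall u, based x0 y0 (w u)) -> continuous (g \o w).
Proof.
move=> wc wB; apply/continuous_subspace_setT.
apply: continuous_within_comp gT.2 => [|u _]; last exact: wB.
exact: (continuous_subspace_setT w).1 wc.
Qed.

Lemma transform_pcomp a d : in_pcomp R x0 y0 a d -> in_pcomp R xt0 yt0 (g a) (g d).
Proof.
move=> [gam [gamc gamB <- <-]]; exists (g \o gam); split=> //.
- by apply: continuous_within_comp gT.2 => // t /gamB.
- by move=> t /gamB /gT.1.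
Qed.
End Transform.

Lemma card_atmost_image {T U : Type} (f : T -> U) (S : set T) n :
  card_atmost S n -> card_atmost (f @` S) n.
Proof. by move=> [e Se]; exists (f \o e) => _ [t /Se [i _ <-] <-]; exists i. Qed.

Lemma filt_wr_pushf (U X Xt : Type) (Y Yt : choiceType)
    (x0 : X) (xt0 : Xt) (y0 : Y) (yt0 : Yt)
    (pull : wr U xt0 -> wr U x0) (twist : wr U xt0 -> Y -> Yt)
    (W : set (U -> X -> Y)) (G : (U -> X -> Y) -> U -> Xt -> Yt) s T :
  pull (wr_base U xt0) = wr_base U x0 ->
  (forall w q, W w -> hash xt0 yt0 (G w) q = twist q (hash x0 y0 w (pull q))) ->
  free_ab W T -> filt_wr x0 y0 s T -> filt_wr xt0 yt0 s (pushf G T).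
Proof.
move=> pull0 hashG [finT WT] filtT Rs Rs0 /(card_atmost_image pull) Rs'n.
pose Rs' := pull @` Rs.
have Rs'0 : Rs' (wr_base U x0) by exists (wr_base U xt0).
pose pullR (q : Rs) : Rs' :=
  exist _ (pull (set_val q)) (mem_set (imageP pull (set_valP q))).
pose Psi (v : Rs' -> Y) (q : Rs) := twist (set_val q) (v (pullR q)).
rewrite (pushf_comp _ _ (fin_supp_pushf G finT)) (pushf_comp _ _ finT).
rewrite (eq_pushf _ (Psi \o (@restr _ Y Rs' \o hash x0 y0))) //; last first.
  by move=> w /WT Ww; apply/funext => q; rewrite /= /restr /Psi hashG.
by rewrite -(pushf_comp _ _ finT) -(pushf_comp _ _ finT) filtT // pushf0.
Qed.

Lemma primitive_hash (U : Type) {X Y Xt Yt : topologicalType} {x0 : X} {y0 : Y}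
    (xt0 : Xt) (yt0 : Yt) {g : co X Y -> co Xt Yt} :
  primitive x0 y0 g ->
  exists (pull : wr U xt0 -> wr U x0) (twist : wr U xt0 -> Y -> Yt),
    pull (wr_base U xt0) = wr_base U x0 /\
    forall (w : U -> X -> Y) q, (forall u, based x0 y0 (w u)) ->
      hash xt0 yt0 (fun u => g (w u) : Xt -> Yt) q = twist q (hash x0 y0 w (pull q)).
Proof.
move=> /choice[k /choice[h kh]].
(* A point (u, p) with k p = x0 goes to the basepoint: both sides are then
   h_p y0, as w u is based. *)
pose pull (q : wr U xt0) : wr U x0 :=
  if sval q is Some (u, p) then
    if pselect (k p = x0) is right kp then exist _ (Some (u, k p)) kp else wr_base U x0
  else wr_base U x0.
pose twist (q : wr U xt0) : Y -> Yt := if sval q is Some (_, p) then h p else fun=> yt0.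
exists pull, twist; split=> // w [[[u p]|] ok] wB //=.
rewrite /hash /pull /twist /= (proj2 (kh p)) //.
by case: pselect => [->|kp] //=; rewrite (proj2 (wB u)).
Qed.

Lemma filt_wr_primitive (U : Type) (X Y Xt Yt : topologicalType)
    (x0 : X) (y0 : Y) (xt0 : Xt) (yt0 : Yt) (g : co X Y -> co Xt Yt) s T :
  primitive x0 y0 g ->
  free_ab [set w : U -> X -> Y | forall u, based x0 y0 (w u)] T ->
  filt_wr x0 y0 s T -> filt_wr xt0 yt0 s (pushf (fun w u => g (w u) : Xt -> Yt) T).
Proof.
move=> /(primitive_hash U xt0 yt0)[pull [twist [pull0 hashg]]].
by apply: filt_wr_pushf pull0 _ => w q; apply: hashg.
Qed.

Lemma pushf_finE {A : finType} {B : choiceType} (f : A -> B) (V : A -> int) b :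
  pushf f V b = \sum_(a | f a == b) V a.
Proof.
have sV : supp_in V (enum A) by move=> a _; rewrite mem_enum.
by rewrite (pushfE f (enum_uniq _) sV) big_enum_cond.
Qed.

Lemma prodr_if {K : comPzSemiRingType} {I : finType} (c : pred I) (x : I -> K) :
  \prod_i (if c i then x i else 0) = if [forall i, c i] then \prod_i x i else 0.
Proof.
case: (boolP [forall i, c i]) => [/forallP call|/forallPn[i ci]].
  by apply: eq_bigr => i _; rewrite call.
by rewrite (bigD1 i) //= (negbTE ci) mul0r.
Qed.

Section LayoutGluing.
Context {R : realType} {E : finType} {A : {set {set E}}}.
Hypothesis layA : layout A.
Local Notation I := {F : {set E} | F \in A}.

Lemma layout_face_uniq {F F' : {set E}} {t : simplex R E} :
  F \in A -> F' \in A -> face R F t -> face R F' t -> F = F'.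
Proof.
move=> AF AF' Ft F't; apply/eqP/negPn/negP => FF'.
have t0 e : (set_val t : {ptws E -> R}) e = 0.
  case: (boolP (e \in F)) => [/(layA.2 F F' AF AF' FF')|]; last exact: Ft.
  exact: F't.
have [_] := set_mem (valP t).
by rewrite big1 => [/eqP|e _]; [rewrite eq_sym oner_eq0 | apply: t0].
Qed.

Definition lay_face (t : lay R A) : I :=
  let c := cid2 (set_mem (valP t)) in exist _ (s2val c) (s2valP c).

Lemma lay_faceP (t : lay R A) : face R (sval (lay_face t)) (val t).
Proof. exact: s2valP' (cid2 (set_mem (valP t))). Qed.

Lemma lay_face_incl (F : I) (t : face R (sval F)) : lay_face (face_incl (svalP F) t) = F.
Proof.
apply: val_inj; apply: (layout_face_uniq (valP (lay_face _)) (valP F)).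
  exact: lay_faceP.
exact: set_mem (valP t).
Qed.

Context {V : choiceType} {s : seq (simplex R E -> V)}.
Local Notation sig := (tnth (in_tuple s)).

Definition glue (phi : {ffun I -> 'I_(size s)}) (t : lay R A) : V :=
  sig (phi (lay_face t)) (val t).

Lemma glue_eq {V' : choiceType} (h : V -> V') phi (w : lay R A -> V') :
  (h \o glue phi == w) =
  [forall F : I,
     @restr _ _ (face R (sval F)) (h \o sig (phi F)) == w \o face_incl (svalP F)].
Proof.
apply/eqP/forallP => [<- F|hw].
  by apply/eqP/funext => t; rewrite /= /glue lay_face_incl.
apply/funext => t.
pose tF : face R (sval (lay_face t)) := exist _ (val t) (mem_set (lay_faceP t)).
have tFt : face_incl (svalP (lay_face t)) tF = t by apply: val_inj.
by move/eqP/(congr1 (fun v => v tF)): (hw (lay_face t)) => /=; rewrite tFt => <-.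
Qed.

Hypothesis us : uniq s.

Lemma boxunion_restr_comp {V' : choiceType} (h : V -> V')
    {S : (simplex R E -> V) -> int} :
  supp_in S s ->
  boxunion (fun F => pushf (fun w => @restr _ _ (face R F) (h \o w)) S) =
  pushf (fun phi => h \o glue phi) (fun phi => \prod_(F : I) S (sig (phi F))).
Proof.
(* Expanding the product over faces of sums over s gives a sum over choices
   phi of one element of s per face; a choice contributes to w exactly when
   the pieces glue to w. *)
move=> sS; apply/funext => w; rewrite /boxunion pushf_finE [RHS]big_mkcond /=.
under eq_bigr => F _ do rewrite (pushfE _ us sS) big_tnth big_mkcond /=.
rewrite bigA_distr_bigA; apply: eq_bigr => phi _.
by rewrite prodr_if glue_eq.
Qed.
End LayoutGluing.

Lemma fissile_pushf_comp (R : realType) (E : finType) (V V' : choiceType) (h : V -> V')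
    (S : (simplex R E -> V) -> int) :
  fin_supp S -> fissile S -> fissile (pushf (fun w => h \o w) S).
Proof.
move=> finS fisS A layA; have [s us sS] := fin_supp_seq finS.
have -> : boxunion (A := A)
            (fun F => pushf (@restr _ V' (face R F)) (pushf (fun w => h \o w) S)) =
          boxunion
            (fun F : {set E} => pushf (fun w => @restr _ _ (face R F) (h \o w)) S).
  by apply: funext => w; apply: eq_bigr => F _; rewrite pushf_comp.
rewrite (boxunion_restr_comp layA us h sS).
transitivity (pushf (fun v => h \o v) (pushf (@restr _ V (lay R A)) S)).
  by rewrite (pushf_comp _ _ finS) (pushf_comp _ _ finS).
rewrite fisS // (boxunion_restr_comp layA us id sS).
by rewrite (pushf_comp _ _ (fin_supp_finType _)).
Qed.

Theorem lemma4p3 (R : realType) (X Y Xt Yt : topologicalType)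
    (x0 : X) (y0 : Y) (xt0 : Xt) (yt0 : Yt) :
  cellular R x0 -> cellular R y0 -> cellular R xt0 -> cellular R yt0 ->
  compact [set: X] -> compact [set: Xt] ->
  forall (r : nat) (g : co X Y -> co Xt Yt),
    transform x0 y0 xt0 yt0 g -> primitive x0 y0 g ->
    forall a b : X -> Y, based x0 y0 a -> based x0 y0 b ->
      approx_r R x0 y0 r a b -> approx_r R xt0 yt0 r (g a) (g b).
Proof.
move=> _ _ _ _ _ _ r g gT gP a b _ bB ab E E0.
have [S [SW Sfis Sfilt]] := ab E E0.
exists (pushf (fun w => g \o w) S); split.
- apply: free_ab_pushf SW => w [wc wa]; split.
    by apply: (transform_comp_continuous gT) => // u; apply: in_pcomp_based (wa u).
  by move=> u; apply: (transform_pcomp gT).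
- exact: fissile_pushf_comp SW.1 Sfis.
- have bW : free_ab [set w : simplex R E -> X -> Y | forall u, based x0 y0 (w u)]
              (fgen (fun _ => b)) by apply: free_ab_fgen.
  rewrite -(pushf_fgen (fun w => g \o w)) -pushfB; [|exact: bW.1|exact: SW.1].
  apply: filt_wr_primitive gP _ Sfilt; apply: free_abB bW (free_ab_sub _ SW).
  by move=> w [_ wa] u; apply: in_pcomp_based (wa u).
Qed.
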